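(* Assume $k>1$. Then (1) $r\in\{e-k,\dots,e-1\}$; (2) $0\le l_{k-1}\le\dots\le l_2\le l_1\le p-1$; (3) $c-\delta=p+k+\sum_{i=1}^{k-1}l_i$ and $\delta=(p+1)(e-1)-h-\sum_{i=1}^{k-1}(l_i+1)$.
   Context: Let $(R,\mathfrak m)$ be a one-dimensional local Noetherian domain with quotient field $K$, not regular, analytically irreducible (the integral closure $\overline R$ of $R$ in $K$ is a DVR and a finite $R$-module) and residually rational. Let $v$ be the valuation of $\overline R$ normalized so a uniformizer $t$ has value 1, $v(R)=\{v(a):a\in R\setminus\{0\}\}$, $\mathfrak C=(R:_K\overline R)=t^c\overline R$ with $c$ the least element of $v(R)$ with $c+\mathbb N\subseteq v(R)$, $\delta=\ell_R(\overline R/R)$, $r=\ell_R((R:_K\mathfrak m)/R)$, $e$ the least positive element of $v(R)$. Let $x\in\mathfrak m$ with $v(x)=e$ and $k=\ell_R(R/(\mathfrak C+xR))$. When $k>1$: $p$ is the integer with $c-e\le pe<c$, $h=(p+1)e-c$; $y_1<\dots<y_{k-1}$ are the nonzero elements of $v(R)\setminus v(\mathfrak C+xR)$ (equivalently the $y\in v(R)$ with $0<y<c$ and $y-e\notin v(R)$; they are not multiples of $e$, exceed $e$, and have distinct residues mod $e$); $l_i\ge0$ is the integer with $y_i+l_ie<c\le y_i+(l_i+1)e$. Then $v(R)$ is the disjoint union of $\{0,e,\dots,pe\}$, $\{m\ge c\}$ and the sets $\{y_i,y_i+e,\dots,y_i+l_ie\}$. *)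

From HB Require Import structures.
From mathcomp Require Import all_boot all_order all_algebra.
Set Implicit Arguments. Unset Strict Implicit. Unset Printing Implicit Defensive.
Import Order.TTheory GRing.Theory Num.Theory.
Local Open Scope ring_scope.

Section Defs.
Variable K : fieldType.
Implicit Types (R M N A B I P : K -> Prop).

Definition is_subring R : Prop :=
  [/\ R 0, R 1, (forall a b, R a -> R b -> R (a - b)) &
      (forall a b, R a -> R b -> R (a * b))].

Definition quotient_field_of R : Prop :=
  forall z : K, exists a b, [/\ R a, R b, b != 0 & z = a / b].

Definition is_ideal R I : Prop :=
  [/\ (forall a, I a -> R a), I 0, (forall a b, I a -> I b -> I (a + b)) &
      (forall a b, R a -> I b -> I (a * b))].

Definition fg_ideal R I : Prop :=
  exists s : seq K, (forall i, (i < size s)%N -> I s`_i) /\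
    forall z, I z <-> exists cs : seq K, [/\ size cs = size s,
       (forall i, (i < size cs)%N -> R cs`_i) & z = \sum_(i < size s) cs`_i * s`_i].

Definition noetherian R : Prop := forall I, is_ideal R I -> fg_ideal R I.

(* non-units of R *)
Definition maxideal R : K -> Prop := fun a => R a /\ ~ (a != 0 /\ R a^-1).

Definition is_local R : Prop := is_ideal R (maxideal R).

Definition prime_ideal R P : Prop :=
  [/\ is_ideal R P, ~ P 1 &
      forall a b, R a -> R b -> P (a * b) -> P a \/ P b].

Definition krull_dim1 R : Prop :=
  (exists P, prime_ideal R P /\ exists z, P z /\ z != 0) /\
  forall P, prime_ideal R P -> (exists z, P z /\ z != 0) ->
    forall I, is_ideal R I -> (forall z, P z -> I z) ->
      (forall z, I z -> P z) \/ I 1.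

(* a one-dimensional Noetherian local ring is regular iff its maximal
   ideal is principal *)
Definition regular_dim1 R : Prop :=
  exists g, R g /\ forall z, maxideal R z <-> exists a, R a /\ z = a * g.

(* normalized discrete valuation v on K (v 0 is irrelevant) *)
Definition normalized_valuation (v : K -> int) : Prop :=
  [/\ (forall x y, x != 0 -> y != 0 -> v (x * y) = v x + v y),
      (forall x y, x != 0 -> y != 0 -> x + y != 0 ->
          Num.min (v x) (v y) <= v (x + y)) &
      exists t, t != 0 /\ v t = 1].

Definition valring (v : K -> int) : K -> Prop := fun z => z = 0 \/ 0 <= v z.
Definition valmax (v : K -> int) : K -> Prop := fun z => z = 0 \/ 0 < v z.

Definition integral_closure R : K -> Prop :=
  fun z => exists p : {poly K}, [/\ p \is monic, (forall i, R p`_i) & root p z].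

Definition finite_module R B : Prop :=
  exists s : seq K, (forall i, (i < size s)%N -> B s`_i) /\
    forall z, B z <-> exists cs : seq K, [/\ size cs = size s,
       (forall i, (i < size cs)%N -> R cs`_i) & z = \sum_(i < size s) cs`_i * s`_i].

Definition submodule R M : Prop :=
  [/\ M 0, (forall a b, M a -> M b -> M (a + b)) &
      (forall a b, R a -> M b -> M (a * b))].

Definition subset_of A B : Prop := forall z, A z -> B z.

(* M/N is a simple R-module, for R-submodules N of M *)
Definition simple_step R N M : Prop :=
  [/\ subset_of N M, (exists z, M z /\ ~ N z) &
      forall X, submodule R X -> subset_of N X -> subset_of X M ->
        subset_of X N \/ subset_of M X].

(* length_R (M/N) = n : there is a composition series of length n from N to M *)
Definition length_eq R N M (n : nat) : Prop :=
  exists S : nat -> K -> Prop,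
    [/\ (forall i, submodule R (S i)),
        (forall z, S 0%N z <-> N z), (forall z, S n z <-> M z) &
        forall i, (i < n)%N -> simple_step R (S i) (S i.+1)].

Definition colon R A : K -> Prop := fun z => forall a, A a -> R (z * a).

Definition valset (v : K -> int) A : nat -> Prop :=
  fun n => exists a, [/\ A a, a != 0 & v a = n%:Z].

Definition sum_cxR R (C : K -> Prop) (x : K) : K -> Prop :=
  fun z => exists c b, [/\ C c, R b & z = c + x * b].

End Defs.

From HB Require Import structures.
From mathcomp Require Import all_boot all_order all_algebra zify ring.
From mathcomp Require Import boolp.
Import Order.TTheory GRing.Theory Num.Theory.
Local Open Scope ring_scope.
Set Implicit Arguments. Unset Strict Implicit. Unset Printing Implicit Defensive.

(* Everything is read off the value semigroup S = v(R).  Each simple step of a composition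
   series between R and the DVR (resp. (R : m)) adds exactly one value below the conductor c,
   so delta is the number of gaps of S and r the number of values of (R : m) outside S.
   Below c, S is the disjoint union of the progressions eN and y_i + eN cut at c, which have
   p + 1 and l_i + 1 terms; in particular the window [c - e, c) holds k elements of S.  Every
   value j of (R : m) outside S has j + e in S, and every gap j with c <= j + e is a value of
   (R : m); there are e - 1 gaps of the first kind and e - k of the second. *)

Section Valuation.
Variables (K : fieldType) (v : K -> int).
Hypothesis Hv : normalized_valuation v.

Lemma valM x y : x != 0 -> y != 0 -> v (x * y) = v x + v y.
Proof. by case: Hv => vM _ _; apply: vM. Qed.

Lemma val1 : v 1 = 0.
Proof. by apply: (addrI (v 1)); rewrite addr0 -valM ?oner_neq0 ?mulr1. Qed.

Lemma valN x : x != 0 -> v (- x) = v x.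
Proof.
have m10 : (-1 : K) != 0 by rewrite oppr_eq0 oner_neq0.
have vm1 : v (-1) = 0 by have := valM m10 m10; rewrite mulrNN mulr1 val1; lia.
by move=> x0; rewrite -mulN1r valM // vm1 add0r.
Qed.

Lemma valV x : x != 0 -> v x^-1 = - v x.
Proof. by move=> x0; have := valM x0 (invr_neq0 x0); rewrite mulfV // val1; lia. Qed.

Lemma valX x n : x != 0 -> v (x ^+ n) = n%:Z * v x.
Proof.
move=> x0; elim: n => [|n IH]; first by rewrite expr0 val1 mul0r.
by rewrite exprS valM ?expf_neq0 // IH; lia.
Qed.

Lemma valD_ge m x y : x != 0 -> y != 0 -> x + y != 0 ->
  m <= v x -> m <= v y -> m <= v (x + y).
Proof. by case: Hv => _ vD _ x0 y0 xy0; have := vD x y x0 y0 xy0; lia. Qed.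

Lemma valD_lt x y : x != 0 -> v x < v y -> v (x + y) = v x.
Proof.
move=> x0 vxy; have [->|y0] := eqVneq y 0; first by rewrite addr0.
have xy0 : x + y != 0.
  by apply: contraTneq vxy => /eqP; rewrite addr_eq0 => /eqP->; rewrite valN // ltxx.
have Ny0 : - y != 0 by rewrite oppr_eq0.
have no_gap : ~ v x < v (x + y).
  move=> lt; have := valD_ge xy0 Ny0 (m := v x + 1); rewrite addrK valN //.
  move=> /(_ x0) up; have : v x + 1 <= v x by apply: up; lia.
  lia.
by have := valD_ge x0 y0 xy0 (lexx _) (ltW vxy); lia.
Qed.

Lemma exists_val n : exists2 z, z != 0 & v z = n%:Z.
Proof.
case: Hv => _ _ [t [t0 vt]]; exists (t ^+ n); first exact: expf_neq0.
by rewrite valX // vt mulr1.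
Qed.

End Valuation.

Section Subring.
Variables (K : fieldType) (R : K -> Prop).
Hypothesis HR : is_subring R.

Lemma subring0 : R 0. Proof. by case: HR. Qed.
Lemma subring1 : R 1. Proof. by case: HR. Qed.
Lemma subringB a b : R a -> R b -> R (a - b). Proof. by case: HR => _ _ RB _; apply: RB. Qed.
Lemma subringM a b : R a -> R b -> R (a * b). Proof. by case: HR => _ _ _ RM; apply: RM. Qed.
Lemma subringN a : R a -> R (- a). Proof. by rewrite -sub0r; apply: subringB subring0. Qed.

Lemma subringD a b : R a -> R b -> R (a + b).
Proof. by move=> Ra Rb; rewrite -[b]opprK; apply/subringB/subringN. Qed.

Lemma subring_sum (I : Type) (r : seq I) (P : pred I) (F : I -> K) :
  (forall i, P i -> R (F i)) -> R (\sum_(i <- r | P i) F i).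
Proof. by move=> RF; apply: big_ind => //; [exact: subring0 | exact: subringD]. Qed.

Lemma subringX a n : R a -> R (a ^+ n).
Proof.
by move=> Ra; elim: n => [|n IH]; rewrite ?expr0 ?exprS; [exact: subring1 | exact: subringM].
Qed.

Lemma subring_inv_integral a : R a -> a != 0 -> integral_closure R a^-1 -> R a^-1.
Proof.
move=> Ra a0 [q [monq Rq /rootP qa]].
set n := (size q).-1; have size_q : size q = n.+1 by rewrite prednK // size_poly_gt0 monic_neq0.
(* [a ^+ n * q.[a^-1] = 0] writes [1] as [a] times an element of [R] *)
have : \sum_(i < n.+1) q`_i * a ^+ (n - i) = 0.
  transitivity (a ^+ n * q.[a^-1]); last by rewrite qa mulr0.
  rewrite horner_coef size_q mulr_sumr; apply: eq_bigr => i _.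
  by rewrite mulrCA exprVn -exprB ?leq_ord ?unitfE.
rewrite big_ord_recr /= subnn expr0 mulr1 -lead_coefE (monicP monq) => /eqP.
rewrite addr_eq0 => /eqP sum_eq.
have -> : a^-1 = - \sum_(i < n) q`_i * a ^+ (n - i.+1).
  apply: (mulfI a0); rewrite mulfV // mulrN mulr_sumr -[1]opprK -sum_eq.
  by congr (- _); apply: eq_bigr => i _; rewrite mulrCA -exprS subnSK.
by apply/subringN/subring_sum => i _; apply/subringM/subringX.
Qed.

End Subring.

Section ValuedSubring.
Variables (K : fieldType) (R : K -> Prop) (v : K -> int).
Hypotheses (HR : is_subring R) (Hv : normalized_valuation v).
Hypothesis Hic : forall z, integral_closure R z <-> valring v z.

Lemma subring_val_ge0 a : R a -> a != 0 -> 0 <= v a.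
Proof.
move=> Ra a0; suff /Hic [a_eq0|//] : integral_closure R a by rewrite a_eq0 eqxx in a0.
exists ('X - a%:P); split; [exact: monicXsubC | move=> i | by rewrite root_XsubC].
rewrite coefB coefX coefC; apply: (subringB HR).
  by case: (i == 1); [exact: subring1 | exact: subring0].
by case: ifP => _; [exact: Ra | exact: subring0].
Qed.

Lemma subring_unit a : R a -> a != 0 -> v a = 0 -> R a^-1.
Proof.
move=> Ra a0 va; apply: subring_inv_integral => //; apply/Hic.
by right; rewrite valV // va.
Qed.

Lemma valset0 : valset v R 0.
Proof. by exists 1; split; [exact: subring1 | exact: oner_neq0 | exact: val1]. Qed.

Lemma valsetD m n : valset v R m -> valset v R n -> valset v R (m + n).
Proof.
case=> [a [Ra a0 va]] [b [Rb b0 vb]]; exists (a * b); split.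
- exact: subringM.
- exact: mulf_neq0.
- by rewrite valM // va vb PoszD.
Qed.

Hypothesis Hres : forall z, valring v z -> exists a, R a /\ valmax v (z - a).

Lemma residue_approx z w : z != 0 -> w != 0 -> v z = v w ->
  exists2 b, R b & z - b * w != 0 -> v z < v (z - b * w).
Proof.
move=> z0 w0 vzw; have [|b [Rb vb]] := Hres (z := z / w).
  by right; rewrite valM ?invr_eq0 // valV // vzw subrr.
exists b => //; have -> : z - b * w = w * (z / w - b) by field.
rewrite mulf_eq0 negb_or => /andP[_ nz]; case: vb => [vb|vb].
  by rewrite vb eqxx in nz.
by rewrite valM // vzw ltrDl.
Qed.

Variable c : nat.
Hypotheses (Hq : quotient_field_of R) (Hfin : finite_module R (valring v)).
Hypothesis Hc : forall n, valset v R (c + n).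

Lemma common_denominator : exists d, [/\ R d, d != 0 & forall z, valring v z -> R (d * z)].
Proof.
have [s [_ span]] := Hfin.
have [d [Rd d0 ds]] : exists d, [/\ R d, d != 0 & forall i, (i < size s)%N -> R (d * s`_i)].
  elim: s {span} => [|z s [d [Rd d0 ds]]].
    by exists 1; split => //; [exact: subring1 | exact: oner_neq0].
  have [a [b [Ra Rb b0 ->]]] := Hq z.
  exists (d * b); split; [exact: subringM | exact: mulf_neq0 | case=> [_|i /ds ?] /=].
    by rewrite -mulrA [b * _]mulrC divfK //; exact: subringM.
  by rewrite mulrAC; exact: subringM.
exists d; split => // z /span [cs [size_cs Rcs ->]].
rewrite mulr_sumr; apply: (subring_sum HR) => i _; rewrite mulrCA.
by apply: (subringM HR); [apply: Rcs; rewrite size_cs | apply: ds].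
Qed.

Lemma val_ge_conductor z : z != 0 -> c%:Z <= v z -> R z.
Proof.
have [d [Rd d0 dR]] := common_denominator.
have high (u : K) : u != 0 -> v d <= v u -> R u.
  move=> u0 du; rewrite -(divfK d0 u) mulrC; apply: dR; right.
  by rewrite valM ?invr_eq0 // valV //; lia.
(* descending induction on [v d - v z] *)
suff: forall (m : nat) (z : K), z != 0 -> c%:Z <= v z -> v d <= v z + m%:Z -> R z.
  by move=> H z0 cz; apply: (H `|v d - v z|%N) => //; lia.
elim=> [|m IH] {}z z0 cz dz; first by apply: high; lia.
have [n vz] : exists n : nat, v z = n%:Z by exists `|v z|%N; lia.
have [a [Ra a0 va]] : valset v R n by rewrite -(subnKC (_ : c <= n)%N); [exact: Hc | lia].
have [b Rb vb] := residue_approx z0 a0 (etrans vz (esym va)).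
rewrite -(subrK (b * a) z); apply: (subringD HR); last exact: subringM.
have [->|nz] := eqVneq (z - b * a) 0; first exact: subring0.
by apply: IH => //; move: (vb nz); move: (v (z - b * a)) => u; lia.
Qed.

End ValuedSubring.

Lemma valset_mono (K : fieldType) (v : K -> int) (A B : K -> Prop) j :
  subset_of A B -> valset v A j -> valset v B j.
Proof. by move=> AB [a [Aa a0 va]]; exists a; split => //; apply: AB. Qed.

Section Submodules.
Variables (K : fieldType) (R : K -> Prop).

Definition module_sum (A B : K -> Prop) : K -> Prop :=
  fun z => exists a b, [/\ A a, B b & z = a + b].

Lemma submodule_sum A B : submodule R A -> submodule R B -> submodule R (module_sum A B).
Proof.
case=> A0 AD AM [B0 BD BM]; split.
- by exists 0, 0; rewrite addr0.
- move=> _ _ [a [b [Aa Bb ->]]] [a' [b' [Aa' Bb' ->]]].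
  by exists (a + a'), (b + b'); rewrite addrACA; split; [apply: AD | apply: BD |].
- move=> r _ Rr [a [b [Aa Bb ->]]].
  by exists (r * a), (r * b); rewrite mulrDr; split; [apply: AM | apply: BM |].
Qed.

Variable v : K -> int.
Hypotheses (HR : is_subring R) (Hv : normalized_valuation v).
Hypothesis Hic : forall z, integral_closure R z <-> valring v z.

Definition val_ge_part (A : K -> Prop) (m : int) : K -> Prop :=
  fun z => A z /\ (z = 0 \/ m <= v z).

Lemma submodule_val_ge A m : submodule R A -> submodule R (val_ge_part A m).
Proof.
case=> A0 AD AM; split; first by split; [|left].
- move=> a b [Aa va] [Ab vb]; split; first exact: AD.
  have [->|a0] := eqVneq a 0; first by rewrite add0r.
  have [->|b0] := eqVneq b 0; first by rewrite addr0.
  have [|ab0] := eqVneq (a + b) 0; first by left.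
  case: va => [/eqP|va]; first by rewrite (negbTE a0).
  case: vb => [/eqP|vb]; first by rewrite (negbTE b0).
  by right; apply: valD_ge.
- move=> r a Rr [Aa va]; split; first exact: AM.
  have [->|r0] := eqVneq r 0; first by rewrite mul0r; left.
  case: va => [->|va]; first by rewrite mulr0; left.
  have [->|a0] := eqVneq a 0; first by rewrite mulr0; left.
  by right; rewrite valM //; have := subring_val_ge0 HR Hic Rr r0; lia.
Qed.

Definition card_new_values (N M : K -> Prop) (B : nat) : nat :=
  \sum_(j < B) `[< valset v M j /\ ~ valset v N j >].

Lemma card_new_values_trans A B C n : subset_of A B -> subset_of B C ->
  card_new_values A C n = (card_new_values A B n + card_new_values B C n)%N.
Proof.
move=> AB BC; rewrite -big_split; apply: eq_bigr => j _ /=.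
case: (asboolP (valset v B j)) => jB.
  rewrite (@asboolF (valset v C j /\ ~ valset v B j)) ?addn0; last by case.
  congr (nat_of_bool _); apply: asbool_equiv_eq.
  by split=> -[_ jA]; split=> //; exact: valset_mono BC jB.
rewrite (@asboolF (valset v B j /\ ~ valset v A j)) ?add0n; last by case.
congr (nat_of_bool _); apply: asbool_equiv_eq.
by split=> -[jC jA]; split=> // /(valset_mono AB).
Qed.

Hypothesis Hres : forall z, valring v z -> exists a, R a /\ valmax v (z - a).

Section SimpleStep.
Variables (N M : K -> Prop) (B : nat).
Hypotheses (HN : submodule R N) (HM : submodule R M) (NM : simple_step R N M).
Hypothesis M_ge0 : forall z, M z -> z != 0 -> 0 <= v z.
Hypothesis N_ge : forall z, z != 0 -> B%:Z <= v z -> N z.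

Lemma simple_step_new_value : exists j, valset v M j /\ ~ valset v N j.
Proof.
have [N0 ND NR] := HN; have [_ MD MR] := HM; have [subNM [z [Mz Nz]] _] := NM.
(* descending induction on [B - v z], along the residue approximations of [z] by [N] *)
suff: forall (m : nat) (z : K), M z -> ~ N z -> B%:Z <= v z + m%:Z ->
    exists j, valset v M j /\ ~ valset v N j.
  have z0 : z != 0 by apply: contra_notN Nz => /eqP->.
  by move=> H; apply: (H `|B%:Z - v z|%N z) => //; have := M_ge0 Mz z0; lia.
elim=> [|m IH] {Mz Nz}z Mz Nz Bz;
  have z0 : z != 0 by apply: contra_notN Nz => /eqP->.
  by case: Nz; apply: N_ge => //; lia.
have [n vz] : exists n : nat, v z = n%:Z by exists `|v z|%N; have := M_ge0 Mz z0; lia.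
have [[w [Nw w0 vw]]|] := asboolP (valset v N n); last by exists n; split => //; exists z.
have [b Rb vb] := residue_approx Hv Hres z0 w0 (etrans vz (esym vw)).
apply: (IH (z - b * w)).
- by rewrite -mulNr; apply: MD Mz (MR _ _ (subringN HR Rb) (subNM _ Nw)).
- by move=> N'; apply: Nz; rewrite -(subrK (b * w) z); exact: ND N' (NR _ _ Rb Nw).
- have nz : z - b * w != 0 by apply: contra_notN Nz; rewrite subr_eq0 => /eqP->; exact: NR.
  by move: (vb nz); move: (v (z - b * w)) => u; lia.
Qed.

Lemma simple_step_value_unique i j : valset v M i -> ~ valset v N i ->
  valset v M j -> ~ valset v N j -> i = j.
Proof.
wlog lt_ij : i j / (i < j)%N.
  by move=> wlog Mi Ni Mj Nj; case: (ltngtP i j) => // lt; [|symmetry]; apply: wlog.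
move=> [zi [Mzi zi0 vzi]] Ni Mj Nj; exfalso; have [subNM _ simple] := NM.
(* [X] can be neither [N] (it has the value [j]) nor [M] (it misses the value [i]) *)
pose X := module_sum N (val_ge_part M j%:Z).
have NX : subset_of N X.
  by move=> z Nz; exists z, 0; rewrite addr0; split => //; split; [case: HM | left].
have XM : subset_of X M.
  by move=> _ [a [b [Na [Mb _] ->]]]; case: HM => _ MD _; apply: MD (subNM _ Na) Mb.
case: (simple X (submodule_sum HN (submodule_val_ge _ HM)) NX XM) => [XN|MX].
  case: Mj => zj [Mzj zj0 vzj]; apply: Nj; exists zj; split => //; apply: XN.
  by exists 0, zj; rewrite add0r; split; [case: HN | split => //; right; rewrite vzj |].
have [a [b [Na [Mb vb] zi_eq]]] := MX _ Mzi.
have [b0|b0] := eqVneq b 0.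
  by apply: Ni; exists a; move: zi0 vzi; rewrite zi_eq b0 addr0.
case: vb => [/eqP|vb]; first by rewrite (negbTE b0).
have a0 : a != 0.
  by apply/eqP => a0; move: vb; rewrite (_ : b = zi) ?vzi; [lia | rewrite zi_eq a0 add0r].
have vzib : v zi < v (- b) by rewrite valN // vzi; move: vb; move: (v b) => u; lia.
apply: Ni; exists a; split => //.
by rewrite -vzi (_ : a = zi + - b) ?valD_lt // zi_eq addrK.
Qed.

Lemma simple_step_card_new_values : card_new_values N M B = 1%N.
Proof.
have [j [Mj Nj]] := simple_step_new_value.
have jB : (j < B)%N.
  rewrite ltnNge; apply: contra_notN Nj => Bj; have [z z0 vz] := exists_val Hv j.
  by exists z; split => //; apply: N_ge; rewrite // vz lez_nat.
rewrite /card_new_values (bigD1 (Ordinal jB)) //= asboolT // big1 // => i ij.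
rewrite asboolF // => -[Mi Ni]; move: ij; rewrite -val_eqE /=.
by rewrite (simple_step_value_unique Mi Ni Mj Nj) eqxx.
Qed.

End SimpleStep.

Lemma length_eq_card_new_values N M B n : length_eq R N M n ->
  (forall z, M z -> z != 0 -> 0 <= v z) ->
  (forall z, z != 0 -> B%:Z <= v z -> N z) ->
  n = card_new_values N M B.
Proof.
case=> S [S_sub S0 Sn S_simple] M_ge0 N_ge.
have S_mono i j : (i <= j <= n)%N -> subset_of (S i) (S j).
  elim: j => [|j IH] /andP[ij jn]; first by rewrite leqn0 in ij; move/eqP: ij => ->.
  case: (ltngtP i j.+1) ij => // [ij _|-> _ //] z Siz.
  by have [Sj _ _] := S_simple j jn; apply/Sj/IH => //; rewrite -ltnS ij ltnW.
have N_S i : (i <= n)%N -> subset_of N (S i).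
  by move=> ini z /S0 Nz; apply: (S_mono 0%N) => //; rewrite leq0n.
have S_M i : (i <= n)%N -> subset_of (S i) M.
  by move=> ini z Siz; apply/Sn; apply: (S_mono i) => //; rewrite ini leqnn.
have count i : (i <= n)%N -> card_new_values N (S i) B = i.
  elim: i => [_|i IH ilt].
    rewrite /card_new_values big1 // => j _; rewrite asboolF // => -[S0j []].
    by apply: valset_mono S0j => z /S0.
  rewrite (card_new_values_trans B (N_S i (ltnW ilt)) (S_mono i i.+1 _)); last first.
    by rewrite leqnSn ilt.
  rewrite IH ?(ltnW ilt) //.
  rewrite (simple_step_card_new_values (S_sub i) (S_sub i.+1) (S_simple i ilt)) ?addn1 //.
  - by move=> z /(S_M _ ilt) Mz; exact: M_ge0.
  - by move=> z z0 vz; apply: (N_S i (ltnW ilt)); exact: N_ge.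
rewrite -{1}(count n (leqnn n)); apply: eq_bigr => j _.
congr (nat_of_bool _); apply: asbool_equiv_eq.
by split=> -[Mj Nj]; split => //; apply: valset_mono Mj => z /Sn.
Qed.

End Submodules.

Section ValueCounting.
Local Open Scope nat_scope.

Lemma sum_ord_split (F : nat -> nat) B m n : B = m + n ->
  \sum_(j < B) F j = \sum_(j < m) F j + \sum_(j < n) F (m + j).
Proof. by move=> ->; rewrite big_split_ord. Qed.

Lemma sum_ord_eq (B i : nat) : \sum_(j < B) (j == i :> nat) = (i < B).
Proof.
elim: B => [|B IH]; first by rewrite big_ord0.
by rewrite big_ord_recr /= IH ltnS; case: ltngtP.
Qed.

Lemma sum_ord1 n : \sum_(j < n) 1 = n.
Proof. by rewrite sum1_card card_ord. Qed.

Lemma sum_eq_inj n (y : nat -> nat) (j : nat) :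
  (forall i i', i < n -> i' < n -> y i = y i' -> i = i') ->
  \sum_(i < n) (y i == j) = `[< exists2 i, i < n & y i = j >].
Proof.
move=> y_inj; case: asboolP => [[i0 i0n yi0]|none].
  rewrite (bigD1 (Ordinal i0n)) //= yi0 eqxx big1 // => i; rewrite -val_eqE /= => i_ne.
  by apply/eqP; rewrite eqb0; apply: contra i_ne => /eqP yi; rewrite (y_inj i i0) // yi0 yi.
by rewrite big1 // => i _; apply/eqP; rewrite eqb0; apply/eqP => yi; apply: none; exists i.
Qed.

Variables (S : nat -> bool) (e c : nat).
Definition card_below B := \sum_(j < B) S j.

Lemma card_below_shift B : \sum_(j < B) ((e <= j) && S (j - e)) = card_below (B - e).
Proof.
have [Be|eB] := leqP B e.
  rewrite (_ : B - e = 0); last by apply/eqP; rewrite subn_eq0.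
  by rewrite /card_below big_ord0 big1 // => j _; rewrite leqNgt (leq_trans (ltn_ord j) Be).
rewrite (sum_ord_split (fun j => (e <= j) && S (j - e)) (m := e) (n := B - e)); last first.
  by rewrite subnKC // ltnW.
rewrite big1 ?add0n => [|j _]; last by rewrite leqNgt ltn_ord.
by apply: eq_bigr => j _; rewrite leq_addr addKn.
Qed.

Lemma card_window_gaps : e <= c ->
  \sum_(j < c) ((c <= j + e) && ~~ S j) + card_below c = e + card_below (c - e).
Proof.
move=> e_le_c.
rewrite /card_below (sum_ord_split S (m := c - e) (n := e)) ?subnK //.
rewrite (sum_ord_split (fun j => (c <= j + e) && ~~ S j) (m := c - e) (n := e)) ?subnK //.
rewrite big1 => [|j _]; last by rewrite leqNgt (_ : j + e < c) //; have := ltn_ord j; lia.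
rewrite add0n addnCA addnC -big_split; congr (_ + _).
apply: eq_trans (sum_ord1 e); apply: eq_bigr => j _.
have -> : c <= c - e + j + e by lia.
by case: (S _).
Qed.

Hypothesis e_gt0 : 0 < e.

Section Semigroup.
Hypotheses (S_0 : S 0) (S_addE : forall j, S j -> S (j + e)).
Hypotheses (S_ge : forall j, c <= j -> S j) (S_lt : forall j, 0 < j < e -> S j = false).
Hypothesis e_le_c : e <= c.

Lemma card_below_e : card_below e = 1.
Proof.
rewrite /card_below (bigD1 (Ordinal e_gt0)) //= S_0 big1 // => j.
by rewrite -val_eqE /= => j0; rewrite S_lt // lt0n j0 ltn_ord.
Qed.

Lemma card_shift_gaps : (\sum_(j < c) (~~ S j && S (j + e))).+1 = e.
Proof.
have split_gaps : \sum_(j < c) (~~ S j && S (j + e)) + card_below c = \sum_(j < c) S (j + e).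
  rewrite -big_split; apply: eq_bigr => j _ /=.
  by case: (boolP (S j)) => [/S_addE->|_]; rewrite ?addn0.
have top : \sum_(j < c) S (j + e) = \sum_(j < c - e) S (j + e) + e.
  rewrite (sum_ord_split (fun j => S (j + e)) (m := c - e) (n := e)) ?subnK //; congr (_ + _).
  by apply: eq_trans (sum_ord1 e); apply: eq_bigr => j _; rewrite S_ge //; lia.
have bottom : card_below c = 1 + \sum_(j < c - e) S (j + e).
  rewrite /card_below (sum_ord_split S (m := e) (n := c - e)) ?subnKC //.
  by rewrite -card_below_e; congr (_ + _); apply: eq_bigr => j _; rewrite addnC.
lia.
Qed.

End Semigroup.

Variables (n : nat) (y : nat -> nat).
Hypothesis S_gen : forall j, j < c ->
  S j = (j == 0) + \sum_(i < n) (y i == j) + ((e <= j) && S (j - e)) :> nat.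

Lemma card_below_rec B : B <= c ->
  card_below B = (0 < B) + \sum_(i < n) (y i < B) + card_below (B - e).
Proof.
move=> Bc; rewrite {1}/card_below (eq_bigr _ (fun j _ => S_gen (leq_trans (ltn_ord j) Bc))).
rewrite !big_split /= sum_ord_eq card_below_shift exchange_big /=.
congr (_ + _ + _); apply: eq_bigr => i _.
by rewrite -sum_ord_eq; apply: eq_bigr => j _; rewrite eq_sym.
Qed.

Lemma card_window : 0 < c -> (forall i, i < n -> y i < c) ->
  card_below c = n.+1 + card_below (c - e).
Proof.
move=> c0 y_lt; rewrite card_below_rec // c0; congr (_ + _).
rewrite (eq_bigr (fun=> 1)) ?sum_ord1 // => i _; by rewrite y_lt.
Qed.

Definition card_progression s B := \sum_(t < c) (s + t * e < B).

Lemma card_progression_rec s B : B <= c ->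
  card_progression s B = (s < B) + card_progression s (B - e).
Proof.
rewrite /card_progression; case: c => [|c'] Bc.
  by rewrite !big_ord0; move: Bc; rewrite leqn0 => /eqP->.
rewrite big_ord_recl big_ord_recr /= mul0n addn0.
have -> : (s + c' * e < B - e) = false by apply/negbTE; rewrite -leqNgt; nia.
rewrite addn0; congr (_ + _); apply: eq_bigr => t _; rewrite /bump /=; lia.
Qed.

Lemma card_progression0 s : card_progression s 0 = 0.
Proof. by rewrite /card_progression big1. Qed.

Lemma card_below_progressions B : B <= c ->
  card_below B = card_progression 0 B + \sum_(i < n) card_progression (y i) B.
Proof.
have [m Bm] := ubnP B; elim: m B Bm => // m IH B Bm Bc.
have [->|B0] := posnP B.
  by rewrite /card_below big_ord0 card_progression0 big1 // => i _; exact: card_progression0.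
rewrite card_below_rec // IH; [|lia|lia].
rewrite (card_progression_rec 0 Bc).
under [in RHS]eq_bigr => i _ do rewrite (card_progression_rec _ Bc).
by rewrite big_split /=; lia.
Qed.

Lemma card_progression_eq s L : s + L * e < c -> c <= s + L.+1 * e -> card_progression s c = L.+1.
Proof.
move=> lo hi; transitivity (\sum_(t < c) (t < L.+1)).
  by apply: eq_bigr => t _; congr (nat_of_bool _); apply/idP/idP => ?; nia.
rewrite (sum_ord_split (fun t => t < L.+1) (m := L.+1) (n := c - L.+1)); last by nia.
rewrite [X in _ + X]big1 => [|t _]; last by rewrite ltnNge leq_addr.
by rewrite addn0; apply: eq_trans (sum_ord1 L.+1); apply: eq_bigr => t _; rewrite ltn_ord.
Qed.

End ValueCounting.

Section ValueSemigroup.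
Variables (K : fieldType) (R : K -> Prop) (v : K -> int) (e c : nat).
Hypotheses (HR : is_subring R) (Hv : normalized_valuation v).
Hypothesis Hic : forall z, integral_closure R z <-> valring v z.
Hypothesis Hc_min : forall d, valset v R d -> (forall n, valset v R (d + n)) -> (c <= d)%N.

Local Notation conductor := (colon R (valring v)).
Local Notation colon_m := (colon R (maxideal R)).

Lemma conductor_val_ge (z : K) : conductor z -> z != 0 -> c%:Z <= v z.
Proof.
move=> Cz z0; have Rz : R z by rewrite -[z]mulr1; apply: Cz; right; rewrite val1.
have [n vzn] : exists n : nat, v z = n%:Z.
  by exists `|v z|%N; have := subring_val_ge0 HR Hic Rz z0; lia.
rewrite vzn lez_nat; apply: Hc_min; first by exists z.
move=> m; have [t t0 vt] := exists_val Hv m; exists (z * t); split.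
- by apply: Cz; right; rewrite vt.
- exact: mulf_neq0.
- by rewrite valM // vzn vt.
Qed.

Hypotheses (He : (0 < e)%N) (He_min : forall n, valset v R n -> (0 < n)%N -> (e <= n)%N).

Lemma maxideal_val_ge (a : K) : maxideal R a -> a != 0 -> e%:Z <= v a.
Proof.
case=> Ra not_unit a0; have va_ge0 := subring_val_ge0 HR Hic Ra a0.
have [va0|va_gt0] := eqVneq (v a) 0.
  by case: not_unit; split => //; apply: (subring_unit HR Hv Hic Ra a0).
have [n van] : exists n : nat, v a = n%:Z by exists `|v a|%N; lia.
have : (e <= n)%N by apply: He_min; [exists a | lia].
lia.
Qed.

Hypotheses (Hq : quotient_field_of R) (Hfin : finite_module R (valring v)).
Hypothesis Hres : forall z, valring v z -> exists a, R a /\ valmax v (z - a).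
Hypothesis Hc : forall n, valset v R (c + n).

Let in_R := val_ge_conductor HR Hv Hres Hq Hfin Hc.

Lemma valset_colon_m_ge j : (c <= j + e)%N -> valset v colon_m j.
Proof.
move=> cj; have [z z0 vz] := exists_val Hv j; exists z; split => // a ma.
have [->|a0] := eqVneq a 0; first by rewrite mulr0; exact: subring0.
apply: in_R; first exact: mulf_neq0.
by rewrite valM // vz; have := maxideal_val_ge ma a0; lia.
Qed.

Variable x : K.
Hypotheses (Hxm : maxideal R x) (Hx0 : x != 0) (Hvx : v x = e%:Z).

Local Notation conductor_x := (sum_cxR R conductor x).

Lemma valset_conductor_x j : (j < c)%N ->
  valset v conductor_x j <-> (e <= j)%N /\ valset v R (j - e).
Proof.
move=> jc; split=> [[_ [[z [b [Cz Rb ->]]] zxb0 vzxb]]|[ej [b [Rb b0 vb]]]]; last first.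
  exists (0 + x * b); split; last by rewrite add0r valM // Hvx vb -PoszD subnKC.
  - by exists 0, b; split => // a _; rewrite mul0r; exact: subring0.
  - by rewrite add0r mulf_neq0.
have [b0|b0] := eqVneq b 0.
  by move: zxb0 vzxb; rewrite b0 mulr0 addr0 => z0 vz; have := conductor_val_ge Cz z0; lia.
have xb0 : x * b != 0 by rewrite mulf_neq0.
have [n vbn] : exists n : nat, v b = n%:Z.
  by exists `|v b|%N; have := subring_val_ge0 HR Hic Rb b0; lia.
suff vxb : v (x * b) = j%:Z.
  move: vxb; rewrite valM // Hvx vbn -PoszD => -[<-].
  by rewrite leq_addr addKn; split => //; exists b.
have [z0|z0] := eqVneq z 0; first by move: vzxb; rewrite z0 add0r.
have vz := conductor_val_ge Cz z0.
have [lt|ge] := ltP (v (x * b)) c%:Z.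
  by rewrite -vzxb addrC valD_lt //; move: vz; move: (v z) => u; lia.
by have := valD_ge Hv z0 xb0 zxb0 vz ge; rewrite vzxb; lia.
Qed.

Lemma valset_conductor_x_ge j : (c <= j)%N -> valset v conductor_x j.
Proof.
move=> cj; have [z z0 vz] := exists_val Hv j.
exists (z + x * 0); rewrite mulr0 addr0; split => //.
exists z, 0; rewrite mulr0 addr0; split => //; last exact: subring0.
move=> a [->|va]; first by rewrite mulr0; exact: subring0.
have [->|a0] := eqVneq a 0; first by rewrite mulr0; exact: subring0.
by apply: in_R; [exact: mulf_neq0 | rewrite valM // vz; lia].
Qed.

Lemma valset_colon_m_addE j : valset v colon_m j -> valset v R (j + e).
Proof.
case=> z [mz z0 vz]; exists (z * x); split.
- exact: mz.
- exact: mulf_neq0.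
- by rewrite valM // vz Hvx PoszD.
Qed.

Hypotheses (Hloc : is_local R) (Hreg : ~ regular_dim1 R).

(* if some [z] in [(R : m)] had [v z < 0], then [z x] would be a unit and [m = x R] *)
Lemma colon_m_val_ge0 (z : K) : colon_m z -> z != 0 -> 0 <= v z.
Proof.
move=> mz z0; rewrite leNgt; apply/negP => vz_lt0.
have Rzx : R (z * x) by apply: mz.
have zx0 : z * x != 0 by rewrite mulf_neq0.
have vzx : v (z * x) = 0.
  apply/eqP; rewrite eq_le (subring_val_ge0 HR Hic Rzx zx0) andbT leNgt.
  apply/negP => vzx_gt0.
  have [n vzxn] : exists n : nat, v (z * x) = n%:Z by exists `|v (z * x)|%N; lia.
  have : (e <= n)%N by apply: He_min; [exists (z * x) | lia].
  by move: vzxn; rewrite valM // Hvx; lia.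
have Ru := subring_unit HR Hv Hic Rzx zx0 vzx.
apply: Hreg; exists x; split; first by case: Hxm.
move=> w; split=> [mw|[a [Ra ->]]]; last by case: Hloc => _ _ _; apply.
exists ((z * x)^-1 * (z * w)); split; first exact: subringM Ru (mz w mw).
by field; rewrite z0 Hx0.
Qed.

Let S j := `[< valset v R j >].

Lemma valset_addE j : valset v R j -> valset v R (j + e).
Proof. by move=> Rj; apply: (valsetD HR Hv Rj); exists x; split => //; case: Hxm. Qed.

Lemma length_valring delta : length_eq R R (valring v) delta -> (delta + card_below S c)%N = c.
Proof.
move=> len; rewrite (length_eq_card_new_values HR Hv Hic Hres (B := c) len); last first.
- by move=> z z0 cz; exact: in_R.
- by move=> z [->|//]; rewrite eqxx.
rewrite -big_split; apply: eq_trans (sum_ord1 c); apply: eq_bigr => j _ /=.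
rewrite /S; case: (asboolP (valset v R j)) => Rj; first by rewrite asboolF // => -[].
rewrite asboolT //; split => //; have [z z0 vz] := exists_val Hv j.
by exists z; split => //; right; rewrite vz.
Qed.

Lemma length_colon_m r : length_eq R R colon_m r -> r = card_new_values v R colon_m c.
Proof.
move=> len; apply: (length_eq_card_new_values HR Hv Hic Hres len).
- exact: colon_m_val_ge0.
- by move=> z z0 cz; exact: in_R.
Qed.

Variables (k p : nat) (y l : nat -> nat).
Hypotheses (Hk : (1 < k)%N) (Hp_lo : (p * e < c)%N) (Hp_hi : (c <= p * e + e)%N).
Hypothesis Hy_incr : forall i j, (i < j)%N -> (j < k.-1)%N -> (y i < y j)%N.
Hypothesis Hy : forall n, [/\ (0 < n)%N, valset v R n & ~ valset v conductor_x n]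
  <-> exists2 i, (i < k.-1)%N & y i = n.
Hypothesis Hl : forall i, (i < k.-1)%N ->
  (y i + l i * e < c)%N /\ (c <= y i + (l i).+1 * e)%N.

Lemma y_lt_c i : (i < k.-1)%N -> (y i < c)%N.
Proof.
move=> ik; have [_ _ y_Cx] := (Hy (y i)).2 (ex_intro2 _ _ i ik erefl).
by rewrite ltnNge; apply: contra_notN y_Cx; exact: valset_conductor_x_ge.
Qed.

Lemma y_inj i i' : (i < k.-1)%N -> (i' < k.-1)%N -> y i = y i' -> i = i'.
Proof.
move=> ik i'k yii'; case: (ltngtP i i') => // lt.
- by have := Hy_incr lt i'k; rewrite yii' ltnn.
- by have := Hy_incr lt ik; rewrite yii' ltnn.
Qed.

Lemma e_lt_y0 : (e < y 0)%N.
Proof.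
have k0 : (0 < k.-1)%N by rewrite -ltnS prednK // ltnW.
have [y0 Ry0 Cxy0] := (Hy (y 0)).2 (ex_intro2 _ _ 0%N k0 erefl).
rewrite ltn_neqAle He_min // andbT; apply: contra_notN Cxy0 => /eqP ey0.
apply/valset_conductor_x; first exact: y_lt_c.
by rewrite -ey0 subnn; split => //; exact: valset0 HR Hv.
Qed.

Lemma e_lt_c : (e < c)%N.
Proof. by apply: ltn_trans e_lt_y0 (y_lt_c _); rewrite -ltnS prednK // ltnW. Qed.

Lemma valset_decomposition j : (j < c)%N ->
  S j = ((j == 0) + \sum_(i < k.-1) (y i == j) + ((e <= j) && S (j - e)))%N :> nat.
Proof.
move=> jc; rewrite (sum_eq_inj _ y_inj) -(asbool_equiv_eq (Hy j)).
have [->|/negbTE j0] := eqVneq j 0%N.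
  by rewrite /S (asboolT (valset0 HR Hv)) (leqNgt e) He asboolF // => -[].
rewrite /S; have j_gt0 : (0 < j)%N by rewrite lt0n j0.
case: (asboolP (valset v conductor_x j)) => Cxj.
  have [ej Rje] := (valset_conductor_x jc).1 Cxj.
  have Rj : valset v R j by rewrite -(subnK ej); exact: valset_addE.
  by rewrite (asboolT Rj) (asboolT Rje) ej asboolF // => -[_ _ /(_ Cxj)].
case: (asboolP (valset v R j)) => Rj.
  rewrite (asboolT (And3 j_gt0 Rj Cxj)); case: (boolP (e <= j)%N) => //= ej.
  by rewrite asboolF // => Rje; apply: Cxj; apply/valset_conductor_x.
rewrite asboolF; last by case.
case: (boolP (e <= j)%N) => //= ej; rewrite asboolF // => Rje.
by apply: Rj; rewrite -(subnK ej); exact: valset_addE.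
Qed.

Lemma card_valset_progressions : card_below S c = (p.+1 + \sum_(i < k.-1) (l i).+1)%N.
Proof.
rewrite (card_below_progressions He valset_decomposition (leqnn c)).
rewrite (card_progression_eq He (s := 0) (L := p)) ?add0n ?mulSnr //.
congr (_ + _)%N; apply: eq_bigr => i _.
by have [lo hi] := Hl (ltn_ord i); exact: card_progression_eq.
Qed.

Lemma card_valset_window : card_below S c = (k + card_below S (c - e))%N.
Proof.
by rewrite (card_window valset_decomposition (ltn_trans He e_lt_c) y_lt_c) prednK // ltnW.
Qed.

Lemma length_colon_m_bounds r : length_eq R R colon_m r -> (e <= r + k)%N /\ (r.+1 <= e)%N.
Proof.
move=> /length_colon_m ->; split.
  have gaps_le : (\sum_(j < c) ((c <= j + e) && ~~ S j) <= card_new_values v R colon_m c)%N.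
    apply: leq_sum => j _; case: (boolP (c <= j + e)%N) => //= cj.
    rewrite /S; case: (asboolP (valset v R j)) => //= Rj.
    by rewrite asboolT //; split => //; exact: valset_colon_m_ge.
  by have := card_window_gaps S (ltnW e_lt_c); rewrite card_valset_window; lia.
have S_0 : S 0 by apply/asboolP; exact: valset0 HR Hv.
have S_addE j : S j -> S (j + e) by move/asboolP/valset_addE/asboolP.
have S_ge j : (c <= j)%N -> S j by move=> cj; apply/asboolP; rewrite -(subnKC cj).
have S_lt j : (0 < j < e)%N -> S j = false.
  by case/andP=> j0 je; apply/asboolP => /He_min /(_ j0); rewrite leqNgt je.
rewrite -(card_shift_gaps He S_0 S_addE S_ge S_lt (ltnW e_lt_c)) ltnS; apply: leq_sum => j _.
case: (asboolP (valset v colon_m j /\ ~ valset v R j)) => // -[mj Rj].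
by rewrite /S (asboolF Rj) (asboolT (valset_colon_m_addE mj)).
Qed.

Lemma l_decreasing i : (i.+1 < k.-1)%N -> (l i.+1 <= l i)%N.
Proof.
move=> ik; have := Hy_incr (ltnSn i) ik.
by have [lo hi] := Hl ik; have [lo' hi'] := Hl (ltnW ik); nia.
Qed.

Lemma l0_lt_p : (l 0 < p)%N.
Proof.
have k0 : (0 < k.-1)%N by rewrite -ltnS prednK // ltnW.
by have := e_lt_y0; have [lo hi] := Hl k0; nia.
Qed.

Lemma value_semigroup_invariants delta r :
  length_eq R R (valring v) delta -> length_eq R R colon_m r ->
  [/\ (e%:Z - k%:Z <= r%:Z) && (r%:Z <= e%:Z - 1),
      (forall i, (i.+1 < k.-1)%N -> (l i.+1 <= l i)%N) /\ (l 0%N)%:Z <= p%:Z - 1,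
      c%:Z - delta%:Z = p%:Z + k%:Z + \sum_(i < k.-1) (l i)%:Z &
      delta%:Z = (p%:Z + 1) * (e%:Z - 1) - ((p%:Z + 1) * e%:Z - c%:Z)
                 - \sum_(i < k.-1) ((l i)%:Z + 1)].
Proof.
move=> /length_valring delta_c /length_colon_m_bounds [r_lo r_hi].
rewrite card_valset_progressions in delta_c.
have sum_lS : (\sum_(i < k.-1) (l i).+1 = \sum_(i < k.-1) l i + k.-1)%N.
  by under eq_bigr do rewrite -addn1; rewrite big_split sum_ord1.
have sum_lZ : \sum_(i < k.-1) (l i)%:Z = (\sum_(i < k.-1) l i)%N%:Z.
  by rewrite -natz natr_sum; apply: eq_bigr => i _; rewrite natz.
have sum_lSZ : \sum_(i < k.-1) ((l i)%:Z + 1) = (\sum_(i < k.-1) (l i).+1)%N%:Z.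
  by rewrite -natz natr_sum; apply: eq_bigr => i _; rewrite -addn1 natz PoszD.
rewrite sum_lZ sum_lSZ sum_lS; rewrite sum_lS in delta_c.
have := l0_lt_p; have k_eq : k.-1.+1 = k by rewrite prednK // ltnW.
split; [apply/andP; split; lia | split; [exact: l_decreasing | lia] | lia | nia].
Qed.

End ValueSemigroup.

Theorem proposition1p8 (K : fieldType) (R : K -> Prop) (v : K -> int)
  (e c delta r k p : nat) (x : K) (y l : nat -> nat) :
  (* R is a one-dimensional local Noetherian domain with quotient field K *)
  is_subring R -> quotient_field_of R -> noetherian R -> is_local R ->
  krull_dim1 R ->
  (* not regular *)
  ~ regular_dim1 R ->
  (* analytically irreducible: the integral closure is the DVR of v, finite over R *)
  normalized_valuation v ->
  (forall z, integral_closure R z <-> valring v z) ->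
  finite_module R (valring v) ->
  (* residually rational *)
  (forall z, valring v z -> exists a, R a /\ valmax v (z - a)) ->
  (* c is the conductor degree *)
  valset v R c -> (forall n, valset v R (c + n)) ->
  (forall d, valset v R d -> (forall n, valset v R (d + n)) -> (c <= d)%N) ->
  length_eq R R (valring v) delta ->
  length_eq R R (colon R (maxideal R)) r ->
  valset v R e -> (0 < e)%N -> (forall n, valset v R n -> (0 < n)%N -> (e <= n)%N) ->
  maxideal R x -> x != 0 -> v x = e%:Z ->
  length_eq R (sum_cxR R (colon R (valring v)) x) R k ->
  (1 < k)%N ->
  (c <= p * e + e)%N -> (p * e < c)%N ->
  (* y_1 < ... < y_{k-1} (indexed here by 0 .. k-2) *)
  (forall i j, (i < j)%N -> (j < k.-1)%N -> (y i < y j)%N) ->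
  (forall n, [/\ (0 < n)%N, valset v R n &
                 ~ valset v (sum_cxR R (colon R (valring v)) x) n]
             <-> exists2 i, (i < k.-1)%N & y i = n) ->
  (forall i, (i < k.-1)%N -> (y i + l i * e < c)%N /\ (c <= y i + (l i).+1 * e)%N) ->
  [/\ (e%:Z - k%:Z <= r%:Z) && (r%:Z <= e%:Z - 1),
      (forall i, (i.+1 < k.-1)%N -> (l i.+1 <= l i)%N) /\ (l 0%N)%:Z <= p%:Z - 1,
      c%:Z - delta%:Z = p%:Z + k%:Z + \sum_(i < k.-1) (l i)%:Z &
      delta%:Z = (p%:Z + 1) * (e%:Z - 1) - ((p%:Z + 1) * e%:Z - c%:Z)
                 - \sum_(i < k.-1) ((l i)%:Z + 1)].
Proof.
move=> HR Hq _ Hloc _ Hreg Hv Hic Hfin Hres _ Hc Hc_min len_delta len_r _ He He_min Hxm Hx0 Hvx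
  _ Hk Hp_hi Hp_lo Hy_incr Hy Hl.
exact: (value_semigroup_invariants HR Hv Hic Hc_min He He_min Hq Hfin Hres Hc
  Hxm Hx0 Hvx Hloc Hreg Hk Hp_lo Hp_hi Hy_incr Hy Hl len_delta len_r).
Qed.
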